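(* Let $\Gamma_M$ ($M>0$) be a family of nonatomic routing games with a single OD pair with demand $M$, sharing the same graph, path set and edge costs $(c_e)_{e\in\mathcal E}$, where each $c_e$ is a polynomial. Then $\mathrm{PoA}(\Gamma_M)\to 1$ as $M\to 0$.
   Context: A nonatomic routing game with a single OD pair consists of a finite directed multigraph with edge set $\mathcal E$, a nonempty finite set $\mathcal P$ of paths from an origin to a destination, a demand $M>0$, and continuous nondecreasing edge costs $c_e:[0,\infty)\to[0,\infty)$. Feasible flows: $f\in\mathbb R_+^{\mathcal P}$ with $\sum_p f_p=M$; loads $x_e=\sum_{p\ni e}f_p$; path costs $c_p(f)=\sum_{e\in p}c_e(x_e)$. A Wardrop equilibrium is a feasible $f^*$ with $c_p(f^* )\le c_{p'}(f^* )$ whenever $f^*_p>0$. Social cost $L(x)=\sum_e x_ec_e(x_e)$; $\mathrm{Opt}$ is its minimum over feasible loads, $\mathrm{Eq}=L(x^* )$ at an equilibrium load, and $\mathrm{PoA}=\mathrm{Eq}/\mathrm{Opt}$; it is assumed that $\mathrm{Opt}>0$ (otherwise $\mathrm{PoA}:=1$). *)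

From HB Require Import structures.
From mathcomp Require Import all_boot all_order all_algebra.
From mathcomp Require Import classical_sets reals.

Set Implicit Arguments.
Unset Strict Implicit.
Unset Printing Implicit Defensive.

Import Order.TTheory GRing.Theory Num.Theory.
Local Open Scope ring_scope.
Local Open Scope classical_set_scope.

Section Routing.
Variables (R : realType) (V E : finType) (src tgt : E -> V).

Fixpoint walk_from (v : V) (s : seq E) (d : V) : bool :=
  match s with
  | [::] => v == d
  | e :: s' => (src e == v) && walk_from (tgt e) s' d
  end.

Definition is_od_path (o d : V) (s : seq E) : bool :=
  walk_from o s d && uniq (o :: map tgt s).

Variables (P : finType) (pth : P -> seq E) (c : E -> {poly R}).

Definition feasible (M : R) (f : P -> R) : Prop :=
  (forall p, 0 <= f p) /\ \sum_(p : P) f p = M.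

Definition load (f : P -> R) (e : E) : R := \sum_(p : P | e \in pth p) f p.

Definition path_cost (f : P -> R) (p : P) : R :=
  \sum_(e <- pth p) (c e).[load f e].

Definition social_cost (x : E -> R) : R := \sum_(e : E) x e * (c e).[x e].

Definition wardrop_eq (M : R) (f : P -> R) : Prop :=
  feasible M f /\
  forall p p', 0 < f p -> path_cost f p <= path_cost f p'.

Definition Opt (M : R) : R :=
  inf [set social_cost (load f) | f in [set f | feasible M f]].

Definition PoA (M : R) (f : P -> R) : R :=
  if 0 < Opt M then social_cost (load f) / Opt M else 1.

End Routing.

(* Near 0 each cost is c_e(x) = a_e x^d_e + O(x^(d_e+1)), where a_e is the lowest
   nonzero coefficient of c_e, positive since c_e >= 0 (edges with c_e = 0 are free).
   If some path is made of free edges, the equilibrium cost is 0.  Otherwise let k be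
   the largest integer such that some path ps has no non-free edge of degree < k;
   then every path has a non-free edge of degree <= k.  Looking at ps, the common
   equilibrium path cost lam is O(M^k); since some path carries at least M/|P|, every
   feasible flow costs at least of order M^(k+1).  A competitor flow g loses in the
   variational inequality M lam <= sum_p g_p c_p(f) only o(Opt) on the paths through
   a non-free edge of degree < k, which are very expensive for g.  On the other paths
   only the terms a_e x^k of the degree-k edges matter, up to O(M^(k+2)), and for such
   homogeneous costs Young's inequality (k+1) x^k y <= k x^(k+1) + y^(k+1) turns the
   variational inequality into Eq <= Opt + o(Opt). *)

From HB Require Import structures.
From mathcomp Require Import all_boot all_order all_algebra.
From mathcomp Require Import classical_sets reals.
From mathcomp Require Import ring lra.

Set Implicit Arguments.
Unset Strict Implicit.
Unset Printing Implicit Defensive.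

Import Order.TTheory GRing.Theory Num.Theory.
Local Open Scope ring_scope.

Section TrailingTerm.
Variable R : realFieldType.
Implicit Types (p : {poly R}) (x : R).

Definition trail_deg p : nat := find (fun a => a != 0) p.
Definition trail_coef p : R := p`_(trail_deg p).
Definition coef_norm p : R := \sum_(i < size p) `|p`_i|.

Lemma coef_norm_ge0 p : 0 <= coef_norm p.
Proof. exact: sumr_ge0. Qed.

Lemma has_coef_neq0 p : p != 0 -> has (fun a => a != 0) p.
Proof.
move=> p0; apply/hasP; exists (lead_coef p); last by rewrite lead_coef_eq0.
by rewrite lead_coefE mem_nth // ltn_predL size_poly_gt0.
Qed.

Lemma trail_deg_lt_size p : p != 0 -> (trail_deg p < size p)%N.
Proof. by rewrite -has_find; apply: has_coef_neq0. Qed.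

Lemma trail_coef_eq0 p : (trail_coef p == 0) = (p == 0).
Proof.
apply/idP/idP => [|/eqP->]; last by rewrite /trail_coef coef0.
by apply: contraLR => /has_coef_neq0/(nth_find 0).
Qed.

Lemma horner_trail p x : 0 <= x <= 1 ->
  `|p.[x] - trail_coef p * x ^+ trail_deg p| <= coef_norm p * x ^+ (trail_deg p).+1.
Proof.
case/andP=> x0 x1; have [->|p0] := eqVneq p 0.
  by rewrite horner0 /trail_coef coef0 mul0r subr0 normr0 /coef_norm size_poly0 big_ord0 mul0r.
have d_lt := trail_deg_lt_size p0.
rewrite horner_coef (bigD1 (Ordinal d_lt)) //= addrC addrK /coef_norm mulr_suml.
apply: le_trans (ler_norm_sum _ _ _) _; rewrite [leRHS](bigD1 (Ordinal d_lt)) //=.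
rewrite -[leLHS]add0r; apply: lerD; first by rewrite mulr_ge0 ?exprn_ge0.
apply: ler_sum => i ne_id; rewrite normrM [`|x ^+ _|]ger0_norm ?exprn_ge0 //.
have [lt_id|] := ltnP i (trail_deg p).
  by have /negbFE/eqP-> := before_find 0 lt_id; rewrite normr0 !mul0r.
rewrite leq_eqVlt => /predU1P [di|lt_di]; first by move: ne_id; rewrite -val_eqE /= di eqxx.
by rewrite ler_wpM2l // ler_wiXn2l.
Qed.

Lemma trail_coef_ge0 p : (forall x, 0 <= x -> 0 <= p.[x]) -> 0 <= trail_coef p.
Proof.
move=> p_ge0; rewrite leNgt; apply/negP => a_lt0.
have B1_gt0 : 0 < coef_norm p + 1 by rewrite ltr_wpDl ?coef_norm_ge0.
pose x := Order.min 1 (- trail_coef p / (coef_norm p + 1)).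
have x_gt0 : 0 < x by rewrite lt_min ltr01 divr_gt0 ?oppr_gt0.
have x01 : 0 <= x <= 1 by rewrite ltW // ge_min lexx.
have x_small : x * (coef_norm p + 1) <= - trail_coef p.
  by rewrite -ler_pdivlMr // ge_min lexx orbT.
have neg_bound : trail_coef p + coef_norm p * x < 0 by lra.
have : x ^+ trail_deg p * (trail_coef p + coef_norm p * x) < 0.
  by rewrite pmulr_rlt0 ?exprn_gt0.
move: (le_trans (ler_norm _) (horner_trail p x01)) (p_ge0 x (ltW x_gt0)).
rewrite exprS; nra.
Qed.

End TrailingTerm.

Lemma young_pow (R : realDomainType) (k : nat) (x y : R) : 0 <= x -> 0 <= y ->
  k.+1%:R * (x ^+ k * y) <= k%:R * x ^+ k.+1 + y ^+ k.+1.
Proof.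
move=> x0 y0; elim: k => [|k IH]; first by rewrite expr0 expr1 !mul1r mul0r add0r.
rewrite -subr_ge0 [leRHS](_ : _ = y * (k%:R * x ^+ k.+1 + y ^+ k.+1 - k.+1%:R * (x ^+ k * y))
                                   + k.+1%:R * x ^+ k * (x - y) ^+ 2); last first.
  by rewrite !exprS -[k.+2]addn1 -[k.+1]addn1 !natrD; ring.
by apply: addr_ge0; rewrite mulr_ge0 ?sqr_ge0 ?mulr_ge0 ?exprn_ge0 ?subr_ge0.
Qed.

Lemma mul_pow_le_split (R : realFieldType) (d k : nat) (g M eta : R) :
  (d < k)%N -> 0 <= g -> 0 <= M <= 1 -> 0 < eta <= 1 ->
  g * M ^+ k <= eta * M ^+ k.+1 + M * g ^+ d.+1 / eta ^+ k.
Proof.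
case: k => [|k]; rewrite ?ltn0 // ltnS => dk g0 /andP [M0 M1] /andP [eta0 eta1].
have eta0' := ltW eta0; have etaM0 : 0 <= eta * M by rewrite mulr_ge0.
have etaM1 : eta * M <= 1 by rewrite mulr_ile1.
have rest_ge0 : 0 <= M * g ^+ d.+1 / eta ^+ k.+1.
  by rewrite !mulr_ge0 ?invr_ge0 ?exprn_ge0.
have [g_le|etaM_lt] := lerP g (eta * M).
  apply: le_trans (_ : eta * M ^+ k.+2 <= _); last by rewrite lerDl.
  by rewrite [M ^+ k.+2]exprS mulrA; apply: ler_wpM2r => //; apply: exprn_ge0.
have low_g : eta ^+ k.+1 * M ^+ k <= g ^+ d.
  apply: le_trans (_ : (eta * M) ^+ d <= _); last first.
    by apply: lerXn2r; rewrite ?nnegrE // ltW.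
  apply: le_trans (_ : (eta * M) ^+ k <= _); last by rewrite ler_wiXn2l.
  by rewrite exprMn ler_wpM2r ?exprn_ge0 // exprS ler_piMl ?exprn_ge0.
apply: le_trans (_ : M * g ^+ d.+1 / eta ^+ k.+1 <= _); last first.
  by rewrite lerDr mulr_ge0 ?exprn_ge0.
rewrite ler_pdivlMr ?exprn_gt0 //.
rewrite [leLHS](_ : _ = M * (g * (eta ^+ k.+1 * M ^+ k))); last by rewrite exprS; ring.
by rewrite [g ^+ _]exprS; apply: ler_wpM2l => //; apply: ler_wpM2l.
Qed.

Lemma mul_le_of_le_div (R : realFieldType) (A B z : R) :
  0 <= A -> 0 <= z -> z <= B / (A + 1) -> z * A <= B.
Proof.
move=> A0 z0; rewrite ler_pdivlMr ?ltr_wpDl // => zA1.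
by apply: le_trans zA1; rewrite ler_wpM2l // lerDl.
Qed.

Lemma od_path_uniq (V E : finType) (src tgt : E -> V) (o d : V) (s : seq E) :
  is_od_path src tgt o d s -> uniq s.
Proof. by case/andP=> _ /= /andP [_ /map_uniq]. Qed.

Lemma exists_ge_mean (R : realFieldType) (T : finType) (F : T -> R) :
  (0 < #|T|)%N -> exists t, (\sum_t F t) / #|T|%:R <= F t.
Proof.
move=> T0; set mean := (\sum_t F t) / #|T|%:R.
have [t ge_mean|lt_mean] := pickP (fun t => mean <= F t); first by exists t.
have lt_F t : F t < mean by rewrite ltNge lt_mean.
have [t0 _] := card_gt0P T0; have : \sum_t F t < \sum_(t : T) mean.
  rewrite (bigD1 t0) //= [ltRHS](bigD1 t0) //= ltr_leD //.
  by apply: ler_sum => t _; apply: ltW.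
rewrite sumr_const -mulr_natr /mean.
by rewrite divfK ?ltxx // pnatr_eq0 -lt0n.
Qed.

Section Flows.
Variables (R : realType) (E P : finType) (pth : P -> seq E) (c : E -> {poly R}).
Hypothesis pth_uniq : forall p, uniq (pth p).
Hypothesis c_ge0 : forall e x, 0 <= x -> 0 <= (c e).[x].
Implicit Types (f g : P -> R) (M : R).

Lemma load_ge0 f e : (forall p, 0 <= f p) -> 0 <= load pth f e.
Proof. by move=> f0; apply: sumr_ge0. Qed.

Lemma load_le_demand M f e : feasible M f -> load pth f e <= M.
Proof.
case=> f0 <-; rewrite /load [leRHS](bigID (fun p => e \in pth p)) /= lerDl.
exact: sumr_ge0.
Qed.

Lemma flow_le_load f p e : (forall p, 0 <= f p) -> e \in pth p -> f p <= load pth f e.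
Proof. by move=> f0 ep; rewrite /load (bigD1 p) //= lerDl sumr_ge0. Qed.

Lemma sum_load_mul f (h : E -> R) :
  \sum_e load pth f e * h e = \sum_p f p * \sum_(e <- pth p) h e.
Proof.
under eq_bigr do rewrite /load mulr_suml big_mkcond /=.
rewrite exchange_big /=; apply: eq_bigr => p _.
rewrite [in RHS]big_uniq // mulr_sumr [in RHS]big_mkcond /=; apply: eq_bigr => e _.
by case: ifP; rewrite ?mul0r.
Qed.

Lemma social_cost_flow f :
  social_cost c (load pth f) = \sum_p f p * path_cost pth c f p.
Proof. exact: sum_load_mul. Qed.

Lemma edge_cost_le_social_cost (z : E -> R) e : (forall e, 0 <= z e) ->
  z e * (c e).[z e] <= social_cost c z.
Proof.
move=> z0; rewrite /social_cost (bigD1 e) //= lerDl.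
by apply: sumr_ge0 => i _; rewrite mulr_ge0 ?c_ge0.
Qed.

Lemma social_cost_ge0 (z : E -> R) : (forall e, 0 <= z e) -> 0 <= social_cost c z.
Proof. by move=> z0; apply: sumr_ge0 => e _; rewrite mulr_ge0 ?c_ge0. Qed.

Lemma edge_cost_le_path_cost f p e : (forall p, 0 <= f p) -> e \in pth p ->
  (c e).[load pth f e] <= path_cost pth c f p.
Proof.
move=> f0 ep; rewrite /path_cost (big_rem e) //= lerDl.
by apply: sumr_ge0 => i _; rewrite c_ge0 ?load_ge0.
Qed.

Lemma wardrop_level M f : 0 < M -> wardrop_eq pth c M f ->
  exists2 lam, forall p, lam <= path_cost pth c f p &
               social_cost c (load pth f) = M * lam.
Proof.
move=> M0 [[f0 fM] f_eq]; have [p1 /andP [_ fp1]] : exists p, true && (0 < f p).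
  by apply: psumr_neq0P => //; rewrite fM; apply/eqP; rewrite gt_eqF.
exists (path_cost pth c f p1) => [p|]; first exact: f_eq.
rewrite social_cost_flow -fM mulr_suml; apply: eq_bigr => p _.
have [->|fp0] := eqVneq (f p) 0; first by rewrite !mul0r.
have fp : 0 < f p by rewrite lt_neqAle eq_sym fp0 f0.
by congr (_ * _); apply/eqP; rewrite eq_le !f_eq.
Qed.

Lemma wardrop_cost_free_path M f p0 : 0 < M -> wardrop_eq pth c M f ->
  (forall e, e \in pth p0 -> c e = 0) -> social_cost c (load pth f) = 0.
Proof.
move=> M0 f_eq free; have [lam lam_le L_eq] := wardrop_level M0 f_eq.
have lam_le0 : lam <= 0.
  apply: le_trans (lam_le p0) _.
  by rewrite /path_cost big_seq big1 // => e /free ->; rewrite horner0.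
apply/eqP; rewrite eq_le L_eq pmulr_rle0 // lam_le0 -L_eq social_cost_ge0 // => e.
by apply: load_ge0; case: f_eq => -[].
Qed.

Lemma exists_bottleneck_degree (D : pred E) (deg : E -> nat) :
  (0 < #|P|)%N -> (forall p, has D (pth p)) ->
  exists k ps, (forall e, e \in pth ps -> D e -> (k <= deg e)%N) /\
               (forall p, exists2 e, e \in pth p & D e && (deg e <= k)%N).
Proof.
move=> P_gt0 hasD.
pose Q k := [exists p, all (fun e => D e ==> (k <= deg e)%N) (pth p)].
have Q0 : exists k, Q k.
  have [p _] := card_gt0P P_gt0; exists 0%N; apply/existsP; exists p.
  by apply/allP => e _; apply/implyP.
have Q_bound k : Q k -> (k <= \max_e deg e)%N.
  case/existsP => p /allP k_le; have /hasP [e ep De] := hasD p.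
  exact: leq_trans (implyP (k_le e ep) De) (leq_bigmax e).
have [k /existsP [ps /allP k_ps] k_max] := ex_maxnP Q0 Q_bound.
exists k, ps; split => [e ep|p]; first exact/implyP/k_ps.
apply/hasP; apply: contraT => /hasPn no_e.
suff /k_max : Q k.+1 by rewrite ltnn.
apply/existsP; exists p; apply/allP => e ep; apply/implyP => De.
by have := no_e e ep; rewrite De -ltnNge.
Qed.

Local Open Scope classical_set_scope.

Lemma PoA_le M f eps : 0 <= eps -> feasible M f ->
  (forall g, feasible M g ->
     social_cost c (load pth f) <= (1 + eps) * social_cost c (load pth g)) ->
  `|PoA pth c M f - 1| <= eps.
Proof.
move=> eps0 f_feas near_opt; rewrite /PoA; have eps1 : 0 < 1 + eps by lra.
set L := social_cost c (load pth f).
set S := [set social_cost c (load pth g) | g in [set g | feasible M g]].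
have S_lb : has_lbound S.
  by exists 0 => _ [g [g0 _] <-]; apply: social_cost_ge0 => e; apply: load_ge0.
have Opt_le : Opt pth c M <= L by apply: ge_inf => //; exists f.
have le_Opt : L / (1 + eps) <= Opt pth c M.
  apply: lb_le_inf; first by exists L, f.
  by move=> _ [g g_feas <-]; rewrite ler_pdivrMr // mulrC near_opt.
case: ifP => Opt0; last by rewrite subrr normr0.
rewrite ger0_norm ?subr_ge0 ?ler_pdivlMr ?mul1r // lerBlDl.
by rewrite ler_pdivrMr // mulrC -ler_pdivrMr.
Qed.

End Flows.

Section LightTraffic.
Variables (R : realType) (E P : finType) (pth : P -> seq E) (c : E -> {poly R}).
Hypothesis pth_uniq : forall p, uniq (pth p).
Hypothesis c_ge0 : forall e x, 0 <= x -> 0 <= (c e).[x].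

Local Notation deg e := (trail_deg (c e)).
Local Notation a e := (trail_coef (c e)).

Definition coef_sum : R := \sum_e (a e + coef_norm (c e)).
Definition trail_min : R := \big[Order.min/1]_(e | c e != 0) a e.

Lemma edge_trail_coef_ge0 e : 0 <= a e.
Proof. by apply: trail_coef_ge0 => x; apply: c_ge0. Qed.

Lemma edge_le_coef_sum e : a e + coef_norm (c e) <= coef_sum.
Proof.
rewrite /coef_sum (bigD1 e) //= lerDl.
by apply: sumr_ge0 => i _; rewrite addr_ge0 ?edge_trail_coef_ge0 ?coef_norm_ge0.
Qed.

Lemma coef_sum_ge0 : 0 <= coef_sum.
Proof.
by apply: sumr_ge0 => e _; rewrite addr_ge0 ?edge_trail_coef_ge0 ?coef_norm_ge0.
Qed.

Lemma trail_min_gt0 : 0 < trail_min.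
Proof.
apply: (big_ind (fun r => 0 < r)) => [|r s r0 s0|e ce]; rewrite ?lt_min ?r0 //.
by rewrite lt0r trail_coef_eq0 ce edge_trail_coef_ge0.
Qed.

Lemma trail_min_le e : c e != 0 -> trail_min <= a e.
Proof. by move=> ce; rewrite /trail_min (bigD1 e) //= ge_min lexx. Qed.

Lemma cost_le_pow e z : 0 <= z <= 1 -> (c e).[z] <= coef_sum * z ^+ deg e.
Proof.
move=> /[dup] z01 /andP [z0 z1]; have := horner_trail (c e) z01.
move=> /(le_trans (ler_norm _)); rewrite lerBlDr => /le_trans; apply.
apply: le_trans (_ : (a e + coef_norm (c e)) * z ^+ deg e <= _); last first.
  by rewrite ler_wpM2r ?exprn_ge0 ?edge_le_coef_sum.
by rewrite addrC mulrDl lerD2l ler_wpM2l ?coef_norm_ge0 // exprS ler_piMl ?exprn_ge0.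
Qed.

Lemma cost_ge_pow e z : c e != 0 -> 0 <= z <= 1 -> z * coef_sum <= trail_min / 2 ->
  trail_min / 2 * z ^+ deg e <= (c e).[z].
Proof.
move=> ce /[dup] z01 /andP [z0 z1] z_small; have := horner_trail (c e) z01.
rewrite distrC => /(le_trans (ler_norm _)) approx.
have norm_le : z * coef_norm (c e) <= trail_min / 2.
  apply: le_trans z_small; rewrite ler_wpM2l //; apply: le_trans (edge_le_coef_sum e).
  by rewrite lerDr edge_trail_coef_ge0.
have a_ge := trail_min_le ce; have zd0 := exprn_ge0 (deg e) z0.
have : trail_min / 2 * z ^+ deg e <= (a e - z * coef_norm (c e)) * z ^+ deg e.
  by rewrite ler_wpM2r //; lra.
move: approx; rewrite exprS; nra.
Qed.

Section Bottleneck.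
Variables (k : nat) (ps : P).
Hypothesis deg_ps : forall e, e \in pth ps -> c e != 0 -> (k <= deg e)%N.
Hypothesis deg_path : forall p, exists2 e, e \in pth p & (c e != 0) && (deg e <= k)%N.

Definition leading e := (c e != 0) && (deg e == k).
Definition steep e := (c e != 0) && (deg e < k)%N.
Definition steep_path p := has steep (pth p).

Local Notation m := (#|P|%:R : R).
Local Notation n := (#|E|%:R : R).
Local Notation beta := (trail_min / 2 / m ^+ k.+1).
Local Notation Lam := ((size (pth ps))%:R * coef_sum).

Lemma leading_cost_approx e z : leading e -> 0 <= z <= 1 ->
  `|(c e).[z] - a e * z ^+ k| <= coef_sum * z ^+ k.+1.
Proof.
case/andP=> _ /eqP <- z01; apply: le_trans (horner_trail _ z01) _.
rewrite ler_wpM2r ?exprn_ge0 //; first by case/andP: z01.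
by apply: le_trans (edge_le_coef_sum e); rewrite lerDr edge_trail_coef_ge0.
Qed.

Lemma flat_cost_le e z : ~~ leading e -> ~~ steep e -> 0 <= z <= 1 ->
  (c e).[z] <= coef_sum * z ^+ k.+1.
Proof.
rewrite /leading /steep => not_lead not_steep /[dup] z01 /andP [z0 z1].
have [->|ce] := eqVneq (c e) 0; first by rewrite horner0 mulr_ge0 ?coef_sum_ge0 ?exprn_ge0.
move: not_lead not_steep; rewrite ce /= -leqNgt leq_eqVlt eq_sym => /negPf -> /= kd.
by apply: le_trans (cost_le_pow e z01) _; rewrite ler_wpM2l ?coef_sum_ge0 ?ler_wiXn2l.
Qed.

Lemma card_paths_gt0 : (0 < #|P|)%N.
Proof. by apply/card_gt0P; exists ps. Qed.

Lemma m_gt0 : 0 < m.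
Proof. by rewrite ltr0n card_paths_gt0. Qed.

Lemma Lam_ge0 : 0 <= Lam.
Proof. by rewrite mulr_ge0 ?coef_sum_ge0. Qed.

Section Demand.
Variables (M lam : R) (f g : P -> R).
Hypotheses (M_gt0 : 0 < M) (M_le1 : M <= 1) (M_small : M * coef_sum <= trail_min / 2).
Hypotheses (f_feas : feasible M f) (g_feas : feasible M g).
Hypotheses (lam_le : forall p, lam <= path_cost pth c f p)
           (eq_cost : social_cost c (load pth f) = M * lam).

Local Notation x := (load pth f).
Local Notation y := (load pth g).

Lemma load_bounds h e : feasible M h -> 0 <= load pth h e <= M.
Proof. by move=> h_feas; rewrite load_le_demand // load_ge0 //; case: h_feas. Qed.

Lemma load_bounds1 h e : feasible M h -> 0 <= load pth h e <= 1.
Proof. by move=> /(load_bounds e) /andP [-> /le_trans ->]. Qed.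

Lemma lam_le_pow : lam <= Lam * M ^+ k.
Proof.
apply: le_trans (lam_le ps) _.
apply: le_trans (_ : \sum_(e <- pth ps) coef_sum * M ^+ k <= _); last first.
  by rewrite big_tnth sumr_const card_ord -mulrA mulr_natl.
rewrite /path_cost big_seq [leRHS]big_seq; apply: ler_sum => e e_ps.
have [->|ce] := eqVneq (c e) 0; first by rewrite horner0 mulr_ge0 ?coef_sum_ge0 ?exprn_ge0 ?ltW.
have /andP [x0 xM] := load_bounds e f_feas.
apply: le_trans (cost_le_pow e (load_bounds1 e f_feas)) _.
rewrite ler_wpM2l ?coef_sum_ge0 //; apply: le_trans (_ : M ^+ deg e <= _).
  by apply: lerXn2r; rewrite ?nnegrE // ltW.
by apply: ler_wiXn2l => //; [exact: ltW | exact: deg_ps].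
Qed.

Lemma social_cost_ge_pow : beta * M ^+ k.+1 <= social_cost c y.
Proof.
have [g0 g_sum] := g_feas; have m0 := m_gt0.
have [p] := exists_ge_mean g card_paths_gt0.
rewrite g_sum => mean_le; have [e e_p /andP [ce dk]] := deg_path p.
have /andP [y0 y1] := load_bounds1 e g_feas; have /andP [_ yM] := load_bounds e g_feas.
have mean_y : M / m <= y e := le_trans mean_le (flow_le_load g0 e_p).
apply: le_trans (edge_cost_le_social_cost c_ge0 e (fun e => load_ge0 pth e g0)).
rewrite (_ : beta * _ = trail_min / 2 * (M / m) ^+ k.+1); last by rewrite expr_div_n; ring.
have tm0 : 0 <= trail_min / 2 by rewrite divr_ge0 ?ltW ?trail_min_gt0.
apply: le_trans (_ : trail_min / 2 * y e ^+ (deg e).+1 <= _).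
  rewrite ler_wpM2l //; apply: le_trans (_ : y e ^+ k.+1 <= _).
    by apply: lerXn2r; rewrite ?nnegrE ?divr_ge0 // ltW.
  by apply: ler_wiXn2l.
rewrite exprS mulrCA ler_wpM2l // cost_ge_pow ?y0 //.
by apply: le_trans M_small; rewrite ler_wpM2r ?coef_sum_ge0.
Qed.

Lemma steep_path_lam_le p (eta : R) : steep_path p -> 0 < eta <= 1 ->
  g p * lam <= Lam * eta * M ^+ k.+1
               + 2 * Lam * M / (trail_min * eta ^+ k) * (g p * path_cost pth c g p).
Proof.
case/hasP=> e e_p /andP [ce dk] eta01; have /andP [eta0 _] := eta01.
have [g0 _] := g_feas; have gp0 := g0 p; have tm0 := trail_min_gt0.
have M01 : 0 <= M <= 1 by rewrite ltW ?M_le1.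
have /andP [y0 yM] := load_bounds e g_feas.
have gy : g p <= y e := flow_le_load g0 e_p.
have cost_low : trail_min / 2 * g p ^+ deg e <= path_cost pth c g p.
  apply: le_trans (edge_cost_le_path_cost c_ge0 g0 e_p).
  apply: le_trans (cost_ge_pow ce (load_bounds1 e g_feas) _); last first.
    by apply: le_trans M_small; rewrite ler_wpM2r ?coef_sum_ge0.
  by rewrite ler_wpM2l ?divr_ge0 ?(ltW tm0) //; apply: lerXn2r; rewrite ?nnegrE.
apply: le_trans (_ : Lam * (g p * M ^+ k) <= _).
  by rewrite mulrCA ler_wpM2l ?lam_le_pow.
apply: le_trans (ler_wpM2l Lam_ge0 (mul_pow_le_split dk gp0 M01 eta01)) _.
rewrite mulrDr [Lam * (eta * _)]mulrA lerD2l.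
rewrite [leRHS](_ : _ = Lam * (M * (g p * ((trail_min / 2)^-1 * path_cost pth c g p)) / eta ^+ k)).
  apply: ler_wpM2l; first exact: Lam_ge0.
  apply: ler_wpM2r; first by rewrite invr_ge0 exprn_ge0 // ltW.
  apply: ler_wpM2l; first exact: ltW.
  by rewrite exprS; apply: ler_wpM2l => //; rewrite ler_pdivlMl ?divr_gt0.
by field; rewrite expf_neq0 ?gt_eqF.
Qed.

Lemma sum_steep_lam_le (eta : R) : 0 < eta <= 1 ->
  \sum_(p | steep_path p) g p * lam
    <= m * (Lam * eta * M ^+ k.+1) + 2 * Lam * M / (trail_min * eta ^+ k) * social_cost c y.
Proof.
move=> eta01; have [g0 _] := g_feas; have /andP [eta0 _] := eta01.
apply: le_trans (ler_sum _ (fun p sp => steep_path_lam_le sp eta01)) _.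
set C := Lam * eta * M ^+ k.+1; set C' := 2 * Lam * M / _.
have M0 := ltW M_gt0; have eta0' := ltW eta0; have tm0 := ltW trail_min_gt0.
have C0 : 0 <= C by rewrite !mulr_ge0 ?ler0n ?coef_sum_ge0 ?exprn_ge0.
have C'0 : 0 <= C' by rewrite !mulr_ge0 ?ler0n ?coef_sum_ge0 ?invr_ge0 ?mulr_ge0 ?exprn_ge0.
rewrite big_split /= lerD //.
  apply: (le_trans (y := \sum_p C)); last by rewrite sumr_const mulr_natl.
  by rewrite [leLHS]big_mkcond; apply: ler_sum => p _; case: ifP.
rewrite -mulr_sumr ler_wpM2l // social_cost_flow // [leRHS](bigID steep_path) /= lerDl.
by apply: sumr_ge0 => p _; rewrite mulr_ge0 ?sumr_ge0 // => e _; rewrite c_ge0 ?load_ge0.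
Qed.

Lemma cost_le_leading e z : ~~ steep e -> 0 <= z <= M ->
  (c e).[z] <= (if leading e then a e * z ^+ k else 0) + coef_sum * M ^+ k.+1.
Proof.
move=> not_steep /andP [z0 zM]; have z01 : 0 <= z <= 1 by rewrite z0 (le_trans zM).
have zpow : coef_sum * z ^+ k.+1 <= coef_sum * M ^+ k.+1.
  by rewrite ler_wpM2l ?coef_sum_ge0 //; apply: lerXn2r; rewrite ?nnegrE // ltW.
case: ifP => [lead|not_lead]; last first.
  by rewrite add0r; apply: le_trans zpow; rewrite flat_cost_le ?not_lead.
move: (leading_cost_approx lead z01) => /(le_trans (ler_norm _)).
by rewrite lerBlDl => /le_trans; apply; rewrite lerD2l.
Qed.

Lemma leading_term_le e z : leading e -> 0 <= z <= M ->
  a e * z ^+ k.+1 <= z * (c e).[z] + coef_sum * M ^+ k.+2.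
Proof.
move=> lead /andP [z0 zM]; have z01 : 0 <= z <= 1 by rewrite z0 (le_trans zM).
move: (leading_cost_approx lead z01); rewrite distrC => /(le_trans (ler_norm _)).
rewrite lerBlDr => approx.
have zpow : coef_sum * z ^+ k.+2 <= coef_sum * M ^+ k.+2.
  by rewrite ler_wpM2l ?coef_sum_ge0 //; apply: lerXn2r; rewrite ?nnegrE // ltW.
apply: le_trans (_ : z * (c e).[z] + coef_sum * z ^+ k.+2 <= _); last by rewrite lerD2l.
rewrite [leLHS](_ : _ = z * (a e * z ^+ k)); last by rewrite exprS; ring.
rewrite [leRHS](_ : _ = z * (coef_sum * z ^+ k.+1 + (c e).[z])); last by rewrite exprS; ring.
exact: ler_wpM2l.
Qed.

Lemma variational_ineq_leading :
  M * lam <= \sum_(e | leading e) a e * (x e ^+ k * y e)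
             + n * coef_sum * M ^+ k.+2 + \sum_(p | steep_path p) g p * lam.
Proof.
have [g0 g_sum] := g_feas; have M0 := ltW M_gt0.
pose phi e := (if leading e then a e * x e ^+ k else 0) + coef_sum * M ^+ k.+1.
have phi0 e : 0 <= phi e.
  have /andP [x0 _] := load_bounds e f_feas.
  rewrite addr_ge0 ?mulr_ge0 ?coef_sum_ge0 ?exprn_ge0 //.
  by case: ifP; rewrite ?mulr_ge0 ?edge_trail_coef_ge0 ?exprn_ge0.
rewrite -[X in X * lam]g_sum mulr_suml (bigID steep_path) /= addrC lerD2r.
apply: le_trans (_ : \sum_(p | ~~ steep_path p) g p * \sum_(e <- pth p) phi e <= _).
  apply: ler_sum => p /hasPn not_steep; rewrite ler_wpM2l //.
  apply: le_trans (lam_le p) _; rewrite /path_cost big_seq [leRHS]big_seq.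
  by apply: ler_sum => e /not_steep e_flat; apply: cost_le_leading; rewrite ?load_bounds.
apply: le_trans (_ : \sum_p g p * \sum_(e <- pth p) phi e <= _).
  rewrite [leRHS](bigID steep_path) /= lerDr.
  by apply: sumr_ge0 => p _; rewrite mulr_ge0 ?sumr_ge0.
rewrite -sum_load_mul // /phi (eq_bigr _ (fun e _ => mulrDr _ _ _)) big_split /= lerD //.
  rewrite [leRHS]big_mkcond /=; apply: ler_sum => e _.
  by case: ifP; rewrite ?mulr0 // => _; rewrite mulrC -mulrA.
rewrite -mulrA mulr_natl -sumr_const; apply: ler_sum => e _.
have /andP [_ yM] := load_bounds e g_feas.
rewrite mulrC [M ^+ k.+2]exprSr mulrA.
by have := ler_wpM2l (mulr_ge0 coef_sum_ge0 (exprn_ge0 k.+1 M0)) yM.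
Qed.

Lemma sum_leading_le_cost (z : E -> R) : (forall e, 0 <= z e <= M) ->
  \sum_(e | leading e) a e * z e ^+ k.+1 <= social_cost c z + n * coef_sum * M ^+ k.+2.
Proof.
move=> z_bounds; have M0 := ltW M_gt0.
have z0 e : 0 <= z e by case/andP: (z_bounds e).
apply: le_trans (_ : \sum_(e | leading e) (z e * (c e).[z e] + coef_sum * M ^+ k.+2) <= _).
  by apply: ler_sum => e lead; apply: leading_term_le.
rewrite big_split /= lerD //.
  rewrite [leRHS](bigID leading) /= lerDl.
  by apply: sumr_ge0 => e _; rewrite mulr_ge0 ?c_ge0.
rewrite sumr_const -mulrA mulr_natl; apply: ler_wpMn2l; last exact: max_card.
by rewrite mulr_ge0 ?coef_sum_ge0 ?exprn_ge0.
Qed.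

Lemma wardrop_cost_le :
  social_cost c x <= social_cost c y + (2 * k%:R + 2) * (n * coef_sum * M ^+ k.+2)
                     + (k%:R + 1) * \sum_(p | steep_path p) g p * lam.
Proof.
set err := n * coef_sum * M ^+ k.+2; set st := \sum_(p | _) _.
set X := \sum_(e | leading e) a e * x e ^+ k.+1.
set Y := \sum_(e | leading e) a e * y e ^+ k.+1.
set Z := \sum_(e | leading e) a e * (x e ^+ k * y e).
have K0 : 0 <= k%:R :> R by [].
have young : (k%:R + 1) * Z <= k%:R * X + Y.
  rewrite /X /Y /Z !mulr_sumr -big_split /=; apply: ler_sum => e _.
  have /andP [x0 _] := load_bounds e f_feas; have /andP [y0 _] := load_bounds e g_feas.
  have := ler_wpM2l (edge_trail_coef_ge0 e) (young_pow k x0 y0).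
  by rewrite natr1 mulrDr !mulrA ![a e * _%:R]mulrC.
have vi := ler_wpM2l (addr_ge0 K0 ler01) variational_ineq_leading.
have hX := ler_wpM2l K0 (sum_leading_le_cost (fun e => load_bounds e f_feas)).
have hY := sum_leading_le_cost (fun e => load_bounds e g_feas).
rewrite -/X -/Y -/Z -/err -/st eq_cost in vi hX hY *.
lra.
Qed.

Lemma wardrop_cost_le_small eps0 eta : 0 <= eps0 -> 0 < eta <= 1 ->
  M * (n * coef_sum) <= eps0 * beta -> eta * (m * Lam) <= eps0 * beta ->
  M * (2 * Lam) <= eps0 * (trail_min * eta ^+ k) ->
  social_cost c x <= (1 + 4 * (k%:R + 1) * eps0) * social_cost c y.
Proof.
move=> eps0_ge0 eta01 small_err small_eta small_M; have /andP [eta0 _] := eta01.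
have Ly := social_cost_ge_pow; have Mk0 := exprn_ge0 k.+1 (ltW M_gt0).
have [g0 _] := g_feas.
have Ly0 : 0 <= social_cost c y := social_cost_ge0 c_ge0 (fun e => load_ge0 pth e g0).
have err_le : n * coef_sum * M ^+ k.+2 <= eps0 * social_cost c y.
  apply: le_trans (_ : eps0 * (beta * M ^+ k.+1) <= _); last by rewrite ler_wpM2l.
  rewrite [leLHS](_ : _ = M * (n * coef_sum) * M ^+ k.+1); last first.
    by rewrite [M ^+ k.+2]exprS; ring.
  by rewrite [leRHS]mulrA; apply: ler_wpM2r.
have st_le : \sum_(p | steep_path p) g p * lam <= 2 * eps0 * social_cost c y.
  apply: le_trans (sum_steep_lam_le eta01) _.
  rewrite [leRHS](_ : _ = eps0 * social_cost c y + eps0 * social_cost c y); last by ring.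
  apply: lerD.
    apply: le_trans (_ : eps0 * (beta * M ^+ k.+1) <= _); last by rewrite ler_wpM2l.
    rewrite [leLHS](_ : _ = eta * (m * Lam) * M ^+ k.+1); last by ring.
    by rewrite [leRHS]mulrA; apply: ler_wpM2r.
  apply: ler_wpM2r => //; rewrite ler_pdivrMr ?mulr_gt0 ?exprn_gt0 ?trail_min_gt0 //.
  by rewrite mulrC.
have := wardrop_cost_le; set K := k%:R; have K0 : 0 <= K by [].
have := ler_wpM2l (_ : 0 <= 2 * K + 2) err_le; have := ler_wpM2l (_ : 0 <= K + 1) st_le.
lra.
Qed.

End Demand.
Lemma wardrop_near_optimal eps : 0 < eps ->
  exists2 delta : R, 0 < delta & forall M, 0 < M -> M < delta ->
    forall f g, wardrop_eq pth c M f -> feasible M g ->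
    social_cost c (load pth f) <= (1 + eps) * social_cost c (load pth g).
Proof.
move=> eps_gt0; have m0 := m_gt0; have tm0 := trail_min_gt0.
have S0 := coef_sum_ge0; have Lam0 := Lam_ge0.
have K1 : 0 < k%:R + 1 :> R by rewrite natr1 ltr0Sn.
pose eps0 := eps / (4 * (k%:R + 1)).
have eps0_gt0 : 0 < eps0 by rewrite divr_gt0 ?mulr_gt0.
have beta0 : 0 < beta by rewrite !divr_gt0 ?exprn_gt0.
have pos1 A : 0 <= A -> 0 < A + 1 by move=> A0; rewrite ltr_wpDl.
have eps_beta : 0 < eps0 * beta := mulr_gt0 eps0_gt0 beta0.
pose eta := Order.min 1 (eps0 * beta / (m * Lam + 1)).
have eta01 : 0 < eta <= 1.
  by rewrite ge_min lexx lt_min ltr01 divr_gt0 // pos1 // mulr_ge0 // ltW.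
have /andP [eta0 _] := eta01.
have small_eta : eta * (m * Lam) <= eps0 * beta.
  by apply: mul_le_of_le_div; rewrite ?mulr_ge0 ?ge_min ?lexx ?orbT // ltW.
have d1 : 0 < trail_min / 2 / (coef_sum + 1) by rewrite !divr_gt0 ?pos1.
have d2 : 0 < eps0 * beta / (n * coef_sum + 1) by rewrite divr_gt0 ?pos1 ?mulr_ge0.
have d3 : 0 < eps0 * (trail_min * eta ^+ k) / (2 * Lam + 1).
  by rewrite divr_gt0 ?pos1 ?mulr_ge0 // mulr_gt0 // mulr_gt0 // exprn_gt0.
exists (Order.min 1 (Order.min (trail_min / 2 / (coef_sum + 1))
         (Order.min (eps0 * beta / (n * coef_sum + 1))
                    (eps0 * (trail_min * eta ^+ k) / (2 * Lam + 1))))).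
  by rewrite !lt_min ltr01 d1 d2 d3.
move=> M M0; rewrite !lt_min => /and4P [M1 M_small M_err M_eta] f g f_eq g_feas.
have [lam lam_le eq_cost] := wardrop_level pth_uniq M0 f_eq.
have le_div A B : 0 <= A -> M < B / (A + 1) -> M * A <= B.
  by move=> A0 /ltW; apply: mul_le_of_le_div A0 (ltW M0).
apply: le_trans (wardrop_cost_le_small M0 (ltW M1) (le_div _ _ S0 M_small) f_eq.1 g_feas
                 lam_le eq_cost (ltW eps0_gt0) eta01 _ small_eta _) _.
- by apply: le_div M_err; rewrite mulr_ge0.
- by apply: le_div M_eta; rewrite mulr_ge0.
rewrite /eps0 mulrCA mulfV ?mulr1 //.
by rewrite mulf_neq0 ?gt_eqF.
Qed.

End Bottleneck.
End LightTraffic.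

Theorem corollary4p5 (R : realType) (V E : finType) (src tgt : E -> V)
  (o d : V) (P : finType) (pth : P -> seq E) (c : E -> {poly R}) :
  (0 < #|P|)%N ->
  injective pth ->
  (forall p, is_od_path src tgt o d (pth p)) ->
  (forall e x, 0 <= x -> 0 <= (c e).[x]) ->
  (forall e x y, 0 <= x -> x <= y -> (c e).[x] <= (c e).[y]) ->
  forall eps : R, 0 < eps -> exists2 delta : R, 0 < delta &
    forall M : R, 0 < M -> M < delta ->
    forall f : P -> R, wardrop_eq pth c M f ->
      `|PoA pth c M f - 1| < eps.
Proof.
move=> P_gt0 _ od_path c_ge0 _ eps eps_gt0.
have pth_uniq p : uniq (pth p) := od_path_uniq (od_path p).
suff [delta delta_gt0 near_opt] : exists2 delta : R, 0 < delta &
    forall M, 0 < M -> M < delta -> forall f g, wardrop_eq pth c M f -> feasible M g ->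
    social_cost c (load pth f) <= (1 + eps / 2) * social_cost c (load pth g).
  exists delta => // M M0 M_lt f f_eq.
  apply: le_lt_trans (PoA_le c_ge0 _ f_eq.1 (near_opt M M0 M_lt f ^~ f_eq)) _.
    by rewrite divr_ge0 ?ltW.
  by rewrite ltr_pdivrMr // ltr_pMr // ltr1n.
have [/existsP [p0 /allP free]|no_free] := boolP [exists p, all (fun e => c e == 0) (pth p)].
  exists 1 => // M M0 _ f g f_eq [g0 _].
  rewrite (wardrop_cost_free_path pth_uniq c_ge0 M0 f_eq (p0 := p0)) => [|e /free /eqP //].
  have := social_cost_ge0 c_ge0 (fun e => load_ge0 pth e g0).
  by apply: mulr_ge0; rewrite addr_ge0 ?divr_ge0 ?ltW.
have costly p : has (fun e => c e != 0) (pth p).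
  by rewrite has_predC; apply: (existsPn no_free).
have [k [ps [deg_ps deg_path]]] := exists_bottleneck_degree (fun e => trail_deg (c e)) P_gt0 costly.
exact: wardrop_near_optimal deg_ps deg_path _ (divr_gt0 eps_gt0 _).
Qed.
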